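(* For all positive real numbers $a\neq b$ and all $t\in(0,1)$, \[ a^{1-t}b^t\le \frac{1}{e}\big((1-t)a+tb\big)^{\frac{(1-2t)(tb+(1-t)a)}{t(1-t)(b-a)}}\left(\frac{b^{\frac{tb}{1-t}}}{a^{\frac{(1-t)a}{t}}}\right)^{\frac{1}{b-a}}\le (1-t)a+tb. \] *)

From Stdlib Require Export Reals.

(* Let L(x, y) = (y ln y - x ln x) / (y - x) - 1 be the logarithm
   of the identric mean of x and y, and A = (1 - t) a + t b. Since A - a = t (b - a)
   and b - A = (1 - t) (b - a), the logarithm of the middle term equals
   (1 - t) L(a, A) + t L(A, b). The identric mean lies between the geometric and
   the arithmetic mean, and both outer bounds then follow from concavity of ln. *)
From Coquelicot Require Import Coquelicot.
From Stdlib Require Import Reals Lra.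
Open Scope R_scope.

Definition ln_identric (x y : R) : R := (y * ln y - x * ln x) / (y - x) - 1.

Lemma exp_le_exp x y : x <= y -> exp x <= exp y.
Proof. intros [Hlt | ->]; [left; exact (exp_increasing _ _ Hlt) | right; reflexivity]. Qed.

Lemma ln_le_sub1 z : 0 < z -> ln z <= z - 1.
Proof. intros Hz. pose proof (exp_ineq1_le (ln z)) as H. rewrite exp_ln in H; lra. Qed.

Lemma one_sub_inv_le_ln z : 0 < z -> 1 - / z <= ln z.
Proof.
  intros Hz. pose proof (ln_le_sub1 (/ z) (Rinv_0_lt_compat _ Hz)) as H.
  rewrite ln_Rinv in H; lra.
Qed.

Lemma ln_concave p q x y : 0 <= p -> 0 <= q -> p + q = 1 -> 0 < x -> 0 < y ->
  p * ln x + q * ln y <= ln (p * x + q * y).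
Proof.
  intros Hp Hq Hpq Hx Hy. set (m := p * x + q * y).
  assert (Hq1 : q = 1 - p) by lra.
  assert (Hm : 0 < m) by (unfold m; destruct (Rle_lt_dec x y); nra).
  pose proof (ln_le_sub1 (x / m) ltac:(apply Rdiv_lt_0_compat; lra)) as Hxm.
  pose proof (ln_le_sub1 (y / m) ltac:(apply Rdiv_lt_0_compat; lra)) as Hym.
  rewrite ln_div in Hxm, Hym by lra.
  assert (p * (x / m - 1) + q * (y / m - 1) = 0)
    by (unfold m in *; rewrite Hq1 in *; field; lra).
  nra.
Qed.

Lemma sub1_mul_ge0_of_derive_ge0 (f df : R -> R) u : 0 < u ->
  (forall x, 0 < x -> is_derive f x (df x)) ->
  (forall x, 0 < x -> 0 <= df x) -> f 1 = 0 ->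
  0 <= (u - 1) * f u.
Proof.
  intros Hu Hd Hdf Hf1.
  pose proof (Rmin_glb_lt 1 u 0 ltac:(lra) Hu) as Hmin.
  destruct (MVT_gen f 1 u df) as [c [Hc Hfu]].
  - intros x Hx. apply Hd. lra.
  - intros x Hx. apply continuity_pt_filterlim, (ex_derive_continuous (V := R_NormedModule)).
    exists (df x). apply Hd. lra.
  - assert (Hdc : 0 <= df c) by (apply Hdf; lra).
    replace (f u) with (df c * (u - 1)) by lra.
    replace ((u - 1) * (df c * (u - 1))) with (df c * (u - 1)²) by (unfold Rsqr; ring).
    apply Rmult_le_pos; [exact Hdc | apply Rle_0_sqr].
Qed.

Lemma div_neq_1 x y : 0 < x -> x <> y -> y / x <> 1.
Proof.
  intros Hx Hxy E. apply Hxy.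
  replace y with (y / x * x) by (field; lra). rewrite E. ring.
Qed.

Lemma ln_identric_1 u : u <> 1 -> ln_identric 1 u = u * ln u / (u - 1) - 1.
Proof. intros Hu. unfold ln_identric. rewrite ln_1. field. lra. Qed.

Lemma ln_identric_scale x y : 0 < x -> 0 < y -> x <> y ->
  ln_identric x y = ln x + ln_identric 1 (y / x).
Proof.
  intros Hx Hy Hxy.
  rewrite ln_identric_1 by exact (div_neq_1 x y Hx Hxy).
  unfold ln_identric. rewrite ln_div by lra.
  field. split; lra.
Qed.

Lemma half_ln_le_ln_identric_1 u : 0 < u -> u <> 1 -> ln u / 2 <= ln_identric 1 u.
Proof.
  intros Hu Hu1.
  assert (Hsign : 0 <= (u - 1) * ((u + 1) * ln u - 2 * (u - 1))).
  { apply (sub1_mul_ge0_of_derive_ge0 (fun x => (x + 1) * ln x - 2 * (x - 1))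
           (fun x => ln x + / x - 1)); [exact Hu | | |].
    - intros x Hx. auto_derive; [lra | field; lra].
    - intros x Hx. pose proof (one_sub_inv_le_ln x Hx). lra.
    - rewrite ln_1. ring. }
  rewrite ln_identric_1 by exact Hu1.
  assert (Hsq : 0 < (u - 1)²) by (apply Rlt_0_sqr; lra).
  assert (Hdiff : u * ln u / (u - 1) - 1 - ln u / 2
    = (u - 1) * ((u + 1) * ln u - 2 * (u - 1)) / (2 * (u - 1)²))
    by (unfold Rsqr; field; lra).
  enough (0 <= (u - 1) * ((u + 1) * ln u - 2 * (u - 1)) / (2 * (u - 1)²)) by lra.
  apply Rdiv_le_0_compat; lra.
Qed.

Lemma ln_identric_1_le_ln_mid u : 0 < u -> u <> 1 -> ln_identric 1 u <= ln ((1 + u) / 2).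
Proof.
  intros Hu Hu1.
  assert (Hsign : 0 <= (u - 1) * ((u - 1) * ln ((1 + u) / 2) - u * ln u + u - 1)).
  { apply (sub1_mul_ge0_of_derive_ge0 (fun x => (x - 1) * ln ((1 + x) / 2) - x * ln x + x - 1)
           (fun x => ln ((1 + x) / 2) + (x - 1) / (1 + x) - ln x));
      [exact Hu | | |].
    - intros x Hx. auto_derive; [lra | unfold Rdiv; field; lra].
    - intros x Hx.
      pose proof (one_sub_inv_le_ln ((1 + x) / (2 * x)) ltac:(apply Rdiv_lt_0_compat; lra)) as H.
      rewrite ln_div, ln_mult in H by lra. rewrite ln_div by lra.
      replace (1 - / ((1 + x) / (2 * x))) with (- ((x - 1) / (1 + x))) in H by (field; lra).
      lra.
    - replace ((1 + 1) / 2) with 1 by field. rewrite ln_1. ring. }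
  rewrite ln_identric_1 by exact Hu1.
  assert (Hsq : 0 < (u - 1)²) by (apply Rlt_0_sqr; lra).
  assert (Hdiff : ln ((1 + u) / 2) - (u * ln u / (u - 1) - 1)
    = (u - 1) * ((u - 1) * ln ((1 + u) / 2) - u * ln u + u - 1) / (u - 1)²)
    by (unfold Rsqr; field; lra).
  enough (0 <= (u - 1) * ((u - 1) * ln ((1 + u) / 2) - u * ln u + u - 1) / (u - 1)²) by lra.
  apply Rdiv_le_0_compat; lra.
Qed.

Lemma ln_geo_mean_le_ln_identric x y : 0 < x -> 0 < y -> x <> y ->
  (ln x + ln y) / 2 <= ln_identric x y.
Proof.
  intros Hx Hy Hxy.
  assert (Hu : 0 < y / x) by (apply Rdiv_lt_0_compat; lra).
  pose proof (div_neq_1 x y Hx Hxy) as Hu1.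
  rewrite ln_identric_scale by assumption.
  pose proof (half_ln_le_ln_identric_1 _ Hu Hu1) as H.
  rewrite ln_div in H by lra. lra.
Qed.

Lemma ln_identric_le_ln_arith_mean x y : 0 < x -> 0 < y -> x <> y ->
  ln_identric x y <= ln ((x + y) / 2).
Proof.
  intros Hx Hy Hxy.
  assert (Hu : 0 < y / x) by (apply Rdiv_lt_0_compat; lra).
  pose proof (div_neq_1 x y Hx Hxy) as Hu1.
  rewrite ln_identric_scale by assumption.
  replace ((x + y) / 2) with (x * ((1 + y / x) / 2)) by (field; lra).
  rewrite ln_mult by lra.
  pose proof (ln_identric_1_le_ln_mid _ Hu Hu1). lra.
Qed.

Lemma middle_term_eq_exp_ln_identric a b t : 0 < a -> 0 < b -> a <> b -> 0 < t < 1 ->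
  let A := (1 - t) * a + t * b in
  / exp 1
  * Rpower A ((1 - 2 * t) * (t * b + (1 - t) * a) / (t * (1 - t) * (b - a)))
  * Rpower (Rpower b (t * b / (1 - t)) / Rpower a ((1 - t) * a / t)) (1 / (b - a))
  = exp ((1 - t) * ln_identric a A + t * ln_identric A b).
Proof.
  intros Ha Hb Hab Ht A.
  unfold Rpower. rewrite ln_div by apply exp_pos. rewrite !ln_exp.
  rewrite <- exp_Ropp, <- !exp_plus. f_equal.
  assert (HAa : A - a = t * (b - a)) by (unfold A; ring).
  assert (HbA : b - A = (1 - t) * (b - a)) by (unfold A; ring).
  unfold ln_identric. rewrite HAa, HbA. unfold A. field. repeat split; lra.
Qed.

Theorem theorem3p1 (a b t : R) (ha : 0 < a) (hb : 0 < b) (hab : a <> b)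
  (ht0 : 0 < t) (ht1 : t < 1) :
  let A := (1 - t) * a + t * b in
  let M := / exp 1
           * Rpower A ((1 - 2 * t) * (t * b + (1 - t) * a) / (t * (1 - t) * (b - a)))
           * Rpower (Rpower b (t * b / (1 - t)) / Rpower a ((1 - t) * a / t)) (1 / (b - a)) in
  Rpower a (1 - t) * Rpower b t <= M /\ M <= A.
Proof.
  intros A M.
  assert (HA : 0 < A) by (unfold A; nra).
  assert (HaA : a <> A) by (unfold A; intro E; apply hab; nra).
  assert (HAb : A <> b) by (unfold A; intro E; apply hab; nra).
  assert (HM : M = exp ((1 - t) * ln_identric a A + t * ln_identric A b))
    by exact (middle_term_eq_exp_ln_identric a b t ha hb hab (conj ht0 ht1)).
  assert (Hconc : (1 - t) * ln a + t * ln b <= ln A)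
    by (apply ln_concave; lra).
  pose proof (ln_geo_mean_le_ln_identric a A ha HA HaA) as Hgeo_aA.
  pose proof (ln_geo_mean_le_ln_identric A b HA hb HAb) as Hgeo_Ab.
  pose proof (ln_identric_le_ln_arith_mean a A ha HA HaA) as Harith_aA.
  pose proof (ln_identric_le_ln_arith_mean A b HA hb HAb) as Harith_Ab.
  split; rewrite HM.
  - unfold Rpower. rewrite <- exp_plus. apply exp_le_exp. nra.
  - assert (Hmid : (1 - t) * ln ((a + A) / 2) + t * ln ((A + b) / 2) <= ln A).
    { replace (ln A) with (ln ((1 - t) * ((a + A) / 2) + t * ((A + b) / 2)))
        by (f_equal; unfold A; field).
      apply ln_concave; lra. }
    apply (Rle_trans _ (exp (ln A))); [apply exp_le_exp; nra | right; exact (exp_ln A HA)].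
Qed.
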